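(* Let $\mathbf L\in\mathbb R^{n\times n}$ be positive semidefinite, $\mathcal D,\mathbf W$ a dictionary with positive weights, $\alpha>0$, $r\geq 1$, and let $l_i$, $\widehat{\mathbf L}$, $\tilde s$ be as in the context; assume $l_i>0$ for all $i\in[n]$ and set $\tilde d=\sum_{i=1}^n l_i$. Let $t\sim\mathrm{Poisson}(re^{1/r}\tilde d)$ and conditionally on $t$ let $\sigma=(\sigma_1,\dots,\sigma_t)$ be i.i.d. with $\Pr(\sigma_j=i)=l_i/\tilde d$; define $[\widetilde{\mathbf L}_\sigma]_{ab}=\frac{\mathbf L_{\sigma_a\sigma_b}}{r\sqrt{l_{\sigma_a}l_{\sigma_b}}}$. Then $$\mathbb E_{t,\sigma}\!\left[\frac{e^{\tilde s}\det(\mathbf I+\alpha\widetilde{\mathbf L}_\sigma)}{e^{t/r}\det(\mathbf I+\alpha\widehat{\mathbf L})}\right]=\exp\big(\tilde s+r\tilde d-re^{1/r}\tilde d\big)\,\frac{\det(\mathbf I+\alpha\mathbf L)}{\det(\mathbf I+\alpha\widehat{\mathbf L})}.$$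
   Context: A dictionary is a sequence $\mathcal D=(\mathcal D_1,\dots,\mathcal D_m)$ of elements of $[n]=\{1,\dots,n\}$, with a diagonal matrix $\mathbf W\in\mathbb R^{m\times m}$ of strictly positive weights. For index sequences $A,B$, $\mathbf L_{A,B}$ denotes the submatrix with rows indexed by $A$ and columns by $B$ (with repetitions allowed). The approximate marginals are $$l_i=\alpha\Big(\mathbf L_{ii}-\alpha\,\mathbf L_{\{i\},\mathcal D}\big(\alpha\mathbf L_{\mathcal D,\mathcal D}+\mathbf W^{-1}\big)^{-1}\mathbf L_{\mathcal D,\{i\}}\Big),\qquad i\in[n].$$ Further, $\widehat{\mathbf L}=\mathbf W^{1/2}\mathbf L_{\mathcal D,\mathcal D}\mathbf W^{1/2}\in\mathbb R^{m\times m}$ and $\tilde s=d_{\mathrm{eff}}(\alpha\widehat{\mathbf L})=\mathrm{tr}\big(\alpha\widehat{\mathbf L}(\alpha\widehat{\mathbf L}+\mathbf I)^{-1}\big)$. The determinant of a $0\times0$ matrix is $1$. *)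

From HB Require Import structures.
From mathcomp Require Import all_boot all_order all_algebra.
From mathcomp Require Import all_classical all_reals all_analysis.
Set Implicit Arguments. Unset Strict Implicit. Unset Printing Implicit Defensive.
Import Order.TTheory GRing.Theory Num.Theory.
Local Open Scope ring_scope.

Section Defs.
Variable R : realType.

Definition psd n (L : 'M[R]_n) : Prop :=
  L^T = L /\ forall x : 'cV[R]_n, 0 <= (x^T *m L *m x) 0 0.

Definition subL n p q (L : 'M[R]_n) (A : 'I_p -> 'I_n) (B : 'I_q -> 'I_n)
  : 'M[R]_(p, q) := \matrix_(a, b) L (A a) (B b).

Definition lmarg n m (L : 'M[R]_n) (D : 'I_m -> 'I_n) (w : 'I_m -> R)
    (alpha : R) (i : 'I_n) : R :=
  alpha * (L i i - alpha *
    (subL L (fun _ : 'I_1 => i) D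
      *m invmx (alpha *: subL L D D + diag_mx (\row_k (w k)^-1))
      *m subL L D (fun _ : 'I_1 => i)) 0 0).

Definition Lhat n m (L : 'M[R]_n) (D : 'I_m -> 'I_n) (w : 'I_m -> R)
  : 'M[R]_m :=
  diag_mx (\row_k Num.sqrt (w k)) *m subL L D D *m diag_mx (\row_k Num.sqrt (w k)).

Definition deff m (A : 'M[R]_m) : R := \tr (A *m invmx (A + 1%:M)).

Definition Ltilde n t (L : 'M[R]_n) (l : 'I_n -> R) (r : R)
    (sigma : {ffun 'I_t -> 'I_n}) : 'M[R]_t :=
  \matrix_(a, b) (L (sigma a) (sigma b) / (r * Num.sqrt (l (sigma a) * l (sigma b)))).

(* t-th term of E_{t,sigma}[f t sigma] where t ~ Poisson(lam) and, given t,
   sigma_1..sigma_t are i.i.d. with Pr(sigma_j = i) = p i. *)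
Definition poisson_iid_term n (lam : R) (p : 'I_n -> R)
    (f : forall t : nat, {ffun 'I_t -> 'I_n} -> R) (t : nat) : R :=
  expR (- lam) * lam ^+ t / (t`!)%:R *
    \sum_(sigma : {ffun 'I_t -> 'I_n}) ((\prod_(j < t) p (sigma j)) * f t sigma).

End Defs.

(* Write p_i = l_i / d~ and let N_i(sigma) count the occurrences of i in a
   word sigma.  With the t x n "selection" matrix
      U_{a,i} = [sigma_a = i] / sqrt(l_i) one has alpha L~_sigma =
      U ((alpha/r) L) U^T and U^T U = diag(N_i / l_i), hence
      det(I + alpha L~_sigma) = det(I + diag(N_i/l_i) (alpha/r) L); by the
      Leibniz formula this is a signed sum over permutations q of products
      prod_i (u_i + v_i N_i) with u_i = [i = q i], v_i = alpha L_{i,q i}/(r l_i).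
   2. Word moments.  The (unnormalized) moment
      sum_sigma prod_a p(sigma_a) prod_i (u_i + v_i N_i) over words of length t
      equals sum_k Q_k t^(k falling) S^(t-k), where S = sum_i p_i and
      Q = prod_i (u_i + v_i p_i X); this follows by induction on t.
   3. Poissonization.  Weighting this by x^t/t! and summing over t gives
      exp(x S) Q(x).  With x = r d~ each factor becomes (I + alpha L)_{i,q i},
      so the permutation sum collapses to det(I + alpha L). *)

From mathcomp Require Import all_boot all_order all_algebra.
From mathcomp Require Import all_classical all_reals all_analysis.
From mathcomp Require Import perm ring.
Set Implicit Arguments. Unset Strict Implicit. Unset Printing Implicit Defensive.
Import Order.TTheory GRing.Theory Num.Theory.
Import numFieldNormedType.Exports.
Local Open Scope classical_set_scope.
Local Open Scope ring_scope.

(* Sylvester's determinant identity det(I + AB) = det(I + BA), for rectangular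
   A and B, from the two block factorizations of [[I, -A], [B, I]]. *)
Lemma det_1_mulmxC (R : comPzRingType) t n (A : 'M[R]_(t, n)) (B : 'M[R]_(n, t)) :
  \det (1%:M + A *m B) = \det (1%:M + B *m A).
Proof.
have lower : block_mx 1%:M (- A) B 1%:M =
   block_mx 1%:M 0 B 1%:M *m block_mx 1%:M (- A) 0 (1%:M + B *m A).
  rewrite mulmx_block !mul1mx !mulmx1 !mul0mx ?mulmx0 ?addr0 ?add0r.
  by rewrite mulmxN addrCA addNr addr0.
have upper : block_mx 1%:M (- A) B 1%:M =
   block_mx (1%:M + A *m B) (- A) 0 1%:M *m block_mx 1%:M 0 B 1%:M.
  rewrite mulmx_block !mul1mx !mulmx1 !mul0mx ?mulmx0 ?addr0 ?add0r.
  by rewrite mulNmx addrK.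
have := congr1 determinant lower; rewrite upper !det_mulmx det_lblock det_ublock.
by rewrite det_ublock !det1 !mul1r !mulr1.
Qed.

Section Words.
Variable T : finType.

Definition rcons_word t (s : {ffun 'I_t -> T}) (x : T) : {ffun 'I_t.+1 -> T} :=
  [ffun a => if unlift ord_max a is Some b then s b else x].

Lemma rcons_word_last t (s : {ffun 'I_t -> T}) x : rcons_word s x ord_max = x.
Proof. by rewrite ffunE unlift_none. Qed.

Lemma rcons_word_widen t (s : {ffun 'I_t -> T}) x (a : 'I_t) :
  rcons_word s x (widen_ord (leqnSn t) a) = s a.
Proof.
have -> : widen_ord (leqnSn t) a = lift ord_max a.
  by apply: val_inj; rewrite /= /bump leqNgt ltn_ord.
by rewrite ffunE liftK.
Qed.

Lemma sum_words_rcons (V : nmodType) t (F : {ffun 'I_t.+1 -> T} -> V) :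
  \sum_(tau : {ffun 'I_t.+1 -> T}) F tau =
  \sum_(x : T) \sum_(s : {ffun 'I_t -> T}) F (rcons_word s x).
Proof.
rewrite pair_big /= (reindex (fun q : T * {ffun 'I_t -> T} => rcons_word q.2 q.1)) //.
exists (fun tau : {ffun 'I_t.+1 -> T} => (tau ord_max, [ffun b => tau (lift ord_max b)])).
  move=> [x s] _ /=; rewrite rcons_word_last; congr (_, _).
  by apply/ffunP => b; rewrite !ffunE liftK.
move=> tau _; apply/ffunP => a; rewrite ffunE.
by case: (unliftP ord_max a) => [b ->|->]; rewrite ?ffunE.
Qed.

Definition occ t (s : {ffun 'I_t -> T}) (i : T) : nat := \sum_(a < t) (s a == i).

Lemma occ_rcons t (s : {ffun 'I_t -> T}) x i :
  occ (rcons_word s x) i = (occ s i + (x == i))%N.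
Proof.
rewrite /occ big_ord_recr /= rcons_word_last.
by under eq_bigr do rewrite rcons_word_widen.
Qed.

Lemma prod_rcons_word (R : comNzRingType) t (p : T -> R) (s : {ffun 'I_t -> T}) x :
  \prod_(a < t.+1) p (rcons_word s x a) = (\prod_(a < t) p (s a)) * p x.
Proof.
rewrite big_ord_recr /= rcons_word_last.
by under eq_bigr do rewrite rcons_word_widen.
Qed.

End Words.

Lemma ffactS_pascal t k : (t.+1 ^_ k.+1 = t ^_ k.+1 + k.+1 * t ^_ k)%N.
Proof.
have [le_kt | lt_tk] := leqP k t; last by rewrite !ffact_small ?muln0 // ltnW.
by rewrite ffactSS ffactnSr mulnC [(k.+1 * _)%N]mulnC -mulnDr addnS subnK.
Qed.

Lemma deriv_prod (R : comNzRingType) m (F : 'I_m -> {poly R}) :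
  (\prod_i F i)^`() = \sum_x (F x)^`() * \prod_(i | i != x) F i.
Proof.
elim: m F => [|m IH] F; first by rewrite big_ord0 big_ord0 derivC.
rewrite big_ord_recr /= derivM IH big_ord_recr /= big_distrl /=.
congr (_ + _).
  apply: eq_bigr => x _; rewrite -mulrA; congr (_ * _).
  rewrite [RHS]big_mkcond big_ord_recr /= [X in X * _ = _]big_mkcond /=.
  have -> : (ord_max != widen_ord (leqnSn m) x) by rewrite neq_ltn /= ltn_ord orbT.
  by congr (_ * _); apply: eq_bigr => i _.
rewrite mulrC; congr (_ * _).
rewrite (big_mkcond (fun i => i != ord_max)) big_ord_recr /= eqxx mulr1.
apply: eq_bigr => i _; have -> // : (widen_ord (leqnSn m) i != ord_max).
by rewrite neq_ltn /= ltn_ord.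
Qed.

Section WordMoments.
Variables (R : comNzRingType) (n : nat).
Implicit Types (p u v : 'I_n -> R).

(* sum over words s of length t of  prod_a p(s_a) * prod_i (u_i + v_i N_i(s)),
   i.e. the expectation of prod_i (u_i + v_i N_i) when p is a probability. *)
Definition word_moment t p u v : R :=
  \sum_(s : {ffun 'I_t -> 'I_n})
    (\prod_(a < t) p (s a)) * \prod_i (u i + v i * (occ s i)%:R).

Lemma prod_occ_bump u v (c : 'I_n -> R) x :
  \prod_i (u i + v i * (c i + (x == i)%:R)) =
  \prod_i (u i + v i * c i) +
  v x * \prod_i ([eta u with x |-> 1] i + [eta v with x |-> 0] i * c i).
Proof.
rewrite (bigD1 x) //= [X in _ = X + _](bigD1 x) //= [X in _ = _ + _ * X](bigD1 x) //=.
rewrite !eqxx mul0r addr0 mul1r.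
under eq_bigr => i /negbTE neq_ix do rewrite eq_sym neq_ix addr0.
under [X in _ = _ + _ * X]eq_bigr => i /negbTE neq_ix do rewrite neq_ix.
rewrite /=; ring.
Qed.

(* Recurrence on the word length, obtained by conditioning on the last letter. *)
Lemma word_moment_rec t p u v :
  word_moment t.+1 p u v = (\sum_i p i) * word_moment t p u v +
    \sum_x p x * v x * word_moment t p [eta u with x |-> 1] [eta v with x |-> 0].
Proof.
rewrite /word_moment sum_words_rcons big_distrl -big_split /=.
apply: eq_bigr => x _; rewrite !big_distrr -big_split /=; apply: eq_bigr => s _.
under [X in _ * X = _]eq_bigr do rewrite occ_rcons natrD.
rewrite prod_rcons_word prod_occ_bump; ring.
Qed.

Definition moment_poly p u v : {poly R} := \prod_i ((u i)%:P + (v i * p i) *: 'X).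

(* Its derivative has the same shape as the second term of word_moment_rec. *)
Lemma moment_poly_deriv p u v :
  (moment_poly p u v)^`() =
  \sum_x (p x * v x) *: moment_poly p [eta u with x |-> 1] [eta v with x |-> 0].
Proof.
rewrite /moment_poly deriv_prod; apply: eq_bigr => x _.
rewrite derivD derivC add0r derivZ derivX alg_polyC -mul_polyC [p x * _]mulrC.
congr (_ * _); rewrite [RHS](bigD1 x) //= !eqxx mul0r scale0r addr0 mul1r.
by apply: eq_bigr => i /negbTE ->.
Qed.

(* Its constant term is the moment of the empty word. *)
Lemma moment_poly_at0 p u v : (moment_poly p u v).[0] = \prod_i u i.
Proof.
rewrite /moment_poly horner_prod; apply: eq_bigr => i _.
by rewrite hornerD hornerC hornerZ hornerX mulr0 addr0.
Qed.

End WordMoments.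

(* The linear functional Q |-> sum_k Q_k t^(k falling) S^(t-k), which replaces
   X^k by the k-th factorial moment of a count in t trials of total weight S. *)
Section FactorialEvaluation.
Variable R : comNzRingType.
Implicit Types (S : R) (Q : {poly R}).

Definition ffact_eval t S Q : R := \sum_(k < t.+1) Q`_k * (t ^_ k)%:R * S ^+ (t - k).

Lemma ffact_eval_sum t S I (r : seq I) (c : I -> R) (Q : I -> {poly R}) :
  ffact_eval t S (\sum_(x <- r) c x *: Q x) = \sum_(x <- r) c x * ffact_eval t S (Q x).
Proof.
rewrite /ffact_eval; under eq_bigr do rewrite coef_sum !big_distrl.
rewrite exchange_big /=; apply: eq_bigr => x _; rewrite big_distrr /=.
by apply: eq_bigr => k _; rewrite coefZ !mulrA.
Qed.

Lemma ffact_eval0 S Q : ffact_eval 0 S Q = Q.[0].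
Proof. by rewrite /ffact_eval big_ord1 ffactn0 subnn expr0 !mulr1 horner_coef0. Qed.

(* The recurrence matching word_moment_rec: one more trial multiplies by S and
   adds the evaluation of the derivative. *)
Lemma ffact_eval_rec t S Q :
  ffact_eval t.+1 S Q = S * ffact_eval t S Q + ffact_eval t S Q^`().
Proof.
have shift : S * \sum_(k < t) Q`_k.+1 * (t ^_ k.+1)%:R * S ^+ (t - k.+1) =
             \sum_(k < t.+1) Q`_k.+1 * (t ^_ k.+1)%:R * S ^+ (t - k).
  rewrite big_ord_recr /= ffact_small // mulr0 mul0r addr0 big_distrr /=.
  by apply: eq_bigr => k _; rewrite -(subnSK (ltn_ord k)) exprS; ring.
rewrite /ffact_eval big_ord_recl [in RHS]big_ord_recl /=.
under eq_bigr => i _ do rewrite -[bump 0 i]/(i.+1).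
under [in RHS]eq_bigr => i _ do rewrite -[bump 0 i]/(i.+1).
rewrite !subn0 !ffactn0 mulrDr shift -addrA -big_split /=; congr (_ + _).
  by rewrite exprS; ring.
apply: eq_bigr => k _.
by rewrite subSS ffactS_pascal natrD natrM coef_deriv -mulr_natr; ring.
Qed.

Lemma ffact_eval_size t S Q :
  ffact_eval t S Q = \sum_(k < size Q) Q`_k * (t ^_ k)%:R * S ^+ (t - k).
Proof.
pose G k := Q`_k * (t ^_ k)%:R * S ^+ (t - k); pose N := maxn t.+1 (size Q).
have widen a : (a <= N)%N -> (forall k, (a <= k)%N -> G k = 0) ->
    \sum_(k < a) G k = \sum_(k < N) G k.
  move=> le_aN G0; rewrite (big_ord_widen _ _ le_aN) big_mkcond.
  by apply: eq_bigr => k _; case: ltnP => // /G0.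
transitivity (\sum_(k < N) G k); last symmetry; apply: widen.
- exact: leq_maxl.
- by move=> k lt_tk; rewrite /G ffact_small // mulr0 mul0r.
- exact: leq_maxr.
- by move=> k le_Qk; rewrite /G nth_default // !mul0r.
Qed.

End FactorialEvaluation.

(* Closed form of the word moments: both sides satisfy the same recurrence. *)
Lemma word_moment_ffact_eval (R : comNzRingType) n t (p u v : 'I_n -> R) :
  word_moment t p u v = ffact_eval t (\sum_i p i) (moment_poly p u v).
Proof.
elim: t u v => [|t IH] u v.
  rewrite ffact_eval0 moment_poly_at0 /word_moment.
  transitivity (\sum_(s : {ffun 'I_0 -> 'I_n}) \prod_i u i).
    apply: eq_bigr => s _; rewrite big_ord0 mul1r; apply: eq_bigr => i _.
    by rewrite /occ big_ord0 mulr0 addr0.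
  by rewrite sumr_const card_ffun !card_ord expn0 mulr1n.
rewrite word_moment_rec ffact_eval_rec IH moment_poly_deriv ffact_eval_sum.
by congr (_ + _); apply: eq_bigr => x _; rewrite IH.
Qed.

(* Summing over a Poisson number of trials: the weights x^t/t! turn factorial
   moments into powers of x. *)
Section PoissonSeries.
Variable R : realType.

Lemma cvg_sum (I : Type) (r : seq I) (u : I -> nat -> R) (a : I -> R) :
  (forall i, u i @ \oo --> a i) ->
  (fun N => \sum_(i <- r) u i N) @ \oo --> \sum_(i <- r) a i.
Proof. by move=> cvg_u; apply: cvg_big => //; exact: add_continuous. Qed.

Lemma series_ffact_exp (x y : R) k :
  series (fun t => x ^+ t / t`!%:R * (t ^_ k)%:R * y ^+ (t - k)) @ \oo -->
  x ^+ k * expR (x * y).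
Proof.
rewrite -(cvg_shiftn k).
have shifted N : series (fun t => x ^+ t / t`!%:R * (t ^_ k)%:R * y ^+ (t - k)) (N + k)%N
   = x ^+ k * series (exp_coeff (x * y)) N.
  rewrite /series /= (big_cat_nat (n := k)) ?leq_addl //=.
  rewrite big1_seq ?add0r; last first.
    by move=> i; rewrite mem_index_iota => /andP [_ lt_ik]; rewrite ffact_small // mulr0 mul0r.
  rewrite -{1}(add0n k) big_addn addnK big_distrr /=; apply: eq_bigr => i _.
  rewrite addnK /exp_coeff /= exprMn exprD.
  have fact_split : ((i + k) ^_ k * i`!)%N = (i + k)`!.
    by rewrite -{2}(addnK k i) ffact_fact ?leq_addl.
  rewrite -fact_split natrM invfM.
  have ffact_neq0 : ((i + k) ^_ k)%:R != 0 :> R.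
    by rewrite pnatr_eq0 -lt0n ffact_gt0 leq_addl.
  by field; rewrite ffact_neq0 pnatr_eq0 -lt0n fact_gt0.
under eq_fun do rewrite shifted.
apply: cvgMl_tmp; exact: is_cvg_series_exp_coeff.
Qed.

Lemma series_ffact_eval (x S : R) (Q : {poly R}) :
  series (fun t => x ^+ t / t`!%:R * ffact_eval t S Q) @ \oo --> expR (x * S) * Q.[x].
Proof.
have -> : series (fun t => x ^+ t / t`!%:R * ffact_eval t S Q) = fun N =>
    \sum_(k < size Q) Q`_k * series (fun t => x ^+ t / t`!%:R * (t ^_ k)%:R * S ^+ (t - k)) N.
  apply/funext => N; rewrite /series /=.
  under eq_bigr do rewrite ffact_eval_size big_distrr.
  rewrite exchange_big; apply: eq_bigr => k _; rewrite big_distrr.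
  by apply: eq_bigr => t _ /=; ring.
rewrite horner_coef big_distrr /=.
under eq_bigr => k _ do rewrite mulrCA [expR _ * _]mulrC.
by apply: cvg_sum => k; apply: cvgMl_tmp; exact: series_ffact_exp.
Qed.

(* Poissonized moments factorize: the counts behave like independent Poisson
   variables with means x p_i. *)
Lemma poissonized_word_moment n (x : R) (p u v : 'I_n -> R) :
  series (fun t => x ^+ t / t`!%:R * word_moment t p u v) @ \oo -->
  expR (x * \sum_i p i) * \prod_i (u i + v i * p i * x).
Proof.
have -> : \prod_i (u i + v i * p i * x) = (moment_poly p u v).[x].
  rewrite /moment_poly horner_prod; apply: eq_bigr => i _.
  by rewrite hornerD hornerC hornerZ hornerX.
under eq_fun do rewrite word_moment_ffact_eval.
exact: series_ffact_eval.
Qed.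

End PoissonSeries.

Lemma sum_delta (R : nzSemiRingType) (T : finType) (x : T) (g : T -> R) :
  \sum_i (x == i)%:R * g i = g x.
Proof.
rewrite (bigD1 x) //= eqxx mul1r big1 ?addr0 // => i neq_ix.
by rewrite eq_sym (negbTE neq_ix) mul0r.
Qed.

Section LtildeDeterminant.
Variables (R : realType) (n t : nat) (L : 'M[R]_n) (l : 'I_n -> R).
Variable s : {ffun 'I_t -> 'I_n}.
Hypothesis l_gt0 : forall i, 0 < l i.

Definition selection : 'M[R]_(t, n) := \matrix_(a, i) ((s a == i)%:R / Num.sqrt (l i)).

Lemma selection_conj (M : 'M[R]_n) :
  selection *m M *m selection^T =
  \matrix_(a, b) (M (s a) (s b) / (Num.sqrt (l (s a)) * Num.sqrt (l (s b)))).
Proof.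
have row_sel a j : (selection *m M) a j = M (s a) j / Num.sqrt (l (s a)).
  rewrite mxE -(sum_delta (s a) (fun i => M i j / Num.sqrt (l i))).
  by apply: eq_bigr => i _; rewrite !mxE; ring.
apply/matrixP => a b; rewrite !mxE.
under eq_bigr do rewrite row_sel !mxE.
rewrite invfM mulrA.
rewrite -(sum_delta (s b) (fun j => M (s a) j / Num.sqrt (l (s a)) / Num.sqrt (l j))).
by apply: eq_bigr => j _; ring.
Qed.

Lemma selection_gram :
  selection^T *m selection = diag_mx (\row_i ((occ s i)%:R / l i)).
Proof.
apply/matrixP => i j; rewrite !mxE.
have [<- | neq_ij] := eqVneq i j; last first.
  rewrite mulr0n big1 // => a _; rewrite !mxE.
  by case: eqP => [-> | _]; rewrite ?(negbTE neq_ij) !mul0r ?mulr0.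
rewrite mulr1n /occ natr_sum big_distrl /=; apply: eq_bigr => a _; rewrite !mxE.
by case: (s a == i); rewrite /= ?mul0r // !div1r -invfM -expr2 sqr_sqrtr ?ltW.
Qed.

Lemma Ltilde_selection (a r : R) :
  a *: Ltilde L l r s = selection *m ((a / r) *: L) *m selection^T.
Proof.
rewrite selection_conj; apply/matrixP => x y; rewrite !mxE sqrtrM ?ltW //.
by rewrite invfM; ring.
Qed.

Lemma det_Ltilde (a r : R) :
  \det (1%:M + a *: Ltilde L l r s) =
  \sum_(q : 'S_n) (-1) ^+ q *
    \prod_i ((i == q i)%:R + a / r * L i (q i) / l i * (occ s i)%:R).
Proof.
rewrite Ltilde_selection det_1_mulmxC mulmxA selection_gram mul_diag_mx.
apply: eq_bigr => q _; congr (_ * _); apply: eq_bigr => i _.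
by rewrite !mxE; ring.
Qed.

End LtildeDeterminant.

(* Expansion of det(I + a L~_sigma) e^{-t/r} averaged over sigma, one
   permutation q at a time.  The Leibniz factor of q is affine in the counts:
   leib_const q i + leib_slope q i * N_i(sigma). *)
Section PoissonDeterminant.
Variables (R : realType) (n : nat) (L : 'M[R]_n) (l : 'I_n -> R) (a r : R).
Hypothesis l_gt0 : forall i, 0 < l i.
Hypothesis r_neq0 : r != 0.

Definition leib_const (q : 'S_n) (i : 'I_n) : R := (i == q i)%:R.
Definition leib_slope (q : 'S_n) (i : 'I_n) : R := a / r * L i (q i) / l i.

(* For each t, the Poisson-weighted average is a signed sum of word moments;
   the factors e^{-t/r} turn the Poisson rate lam into lam e^{-1/r}. *)
Lemma poisson_term_det_Ltilde (lam : R) (p : 'I_n -> R) t :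
  poisson_iid_term lam p
    (fun t sigma => \det (1%:M + a *: Ltilde L l r sigma) / expR (t%:R / r)) t =
  \sum_(q : 'S_n) expR (- lam) * (-1) ^+ q *
    ((lam / expR r^-1) ^+ t / t`!%:R * word_moment t p (leib_const q) (leib_slope q)).
Proof.
have E_t : expR (t%:R / r) = expR r^-1 ^+ t by rewrite expRM_natl.
have E_neq0 : expR r^-1 ^+ t != 0 by rewrite expf_neq0 // gt_eqF ?expR_gt0.
have fact_neq0 : t`!%:R != 0 :> R by rewrite pnatr_eq0 -lt0n fact_gt0.
rewrite /poisson_iid_term /word_moment E_t expr_div_n.
under eq_bigr => sigma _ do rewrite det_Ltilde // big_distrl big_distrr.
rewrite exchange_big big_distrr /=; apply: eq_bigr => q _.
rewrite !big_distrr /=; apply: eq_bigr => sigma _.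
(* Abstract the big products so that field sees them as atoms. *)
set P := \prod_(i < n) _; set W := \prod_(j < t) _; set sg := (-1) ^+ _.
clearbody P W sg.
by field; rewrite E_neq0 fact_neq0.
Qed.

Lemma poisson_det_Ltilde :
  series (poisson_iid_term (r * expR r^-1 * \sum_i l i) (fun i => l i / \sum_i l i)
    (fun t sigma => \det (1%:M + a *: Ltilde L l r sigma) / expR (t%:R / r))) @ \oo -->
  expR (r * \sum_i l i - r * expR r^-1 * \sum_i l i) * \det (1%:M + a *: L).
Proof.
set dt := \sum_i l i; set lam := r * expR r^-1 * dt; set p := fun i => l i / dt.
have rate : lam / expR r^-1 = r * dt by rewrite /lam mulrAC mulfK // gt_eqF ?expR_gt0.
have mass : r * dt * \sum_i p i = r * dt.
  rewrite /p -big_distrl -/dt /=.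
  by have [-> | dt_neq0] := eqVneq dt 0; rewrite ?mulr0 ?mul0r // mulfV ?mulr1.
have entry q i :
    leib_const q i + leib_slope q i * p i * (r * dt) = (1%:M + a *: L) i (q i).
  have dt_neq0 : dt != 0.
    rewrite gt_eqF // /dt (bigD1 i) //= ltr_pwDl // sumr_ge0 // => j _.
    exact: ltW.
  have li_neq0 : l i != 0 by rewrite gt_eqF.
  rewrite !mxE /leib_const /leib_slope /p [_ == _]eq_sym; clearbody dt.
  by field; rewrite li_neq0 dt_neq0 r_neq0.
have -> : series (poisson_iid_term lam p
    (fun t sigma => \det (1%:M + a *: Ltilde L l r sigma) / expR (t%:R / r))) =
  fun N => \sum_(q : 'S_n) expR (- lam) * (-1) ^+ q *
    series (fun t => (lam / expR r^-1) ^+ t / t`!%:R *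
                     word_moment t p (leib_const q) (leib_slope q)) N.
  apply/funext => N; rewrite /series /=.
  under eq_bigr do rewrite poisson_term_det_Ltilde.
  by rewrite exchange_big; apply: eq_bigr => q _; rewrite big_distrr.
have -> : expR (r * dt - lam) * \det (1%:M + a *: L) =
    \sum_(q : 'S_n) expR (- lam) * (-1) ^+ q *
      (expR (lam / expR r^-1 * \sum_i p i) *
       \prod_i (leib_const q i + leib_slope q i * p i * (lam / expR r^-1))).
  rewrite rate mass [\det _]/determinant mulr_sumr; apply: eq_bigr => q _.
  rewrite (eq_bigr _ (fun i _ => entry q i)) addrC expRD -!mulrA.
  by congr (_ * _); rewrite mulrCA.
apply: cvg_sum => q; apply: cvgMl_tmp; exact: poissonized_word_moment.
Qed.

End PoissonDeterminant.

Lemma poisson_iid_cvgZ (R : realType) n (lam : R) (p : 'I_n -> R)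
    (f g : forall t : nat, {ffun 'I_t -> 'I_n} -> R) (c a : R) :
  (forall t s, f t s = c * g t s) ->
  series (poisson_iid_term lam p g) @ \oo --> a ->
  series (poisson_iid_term lam p f) @ \oo --> c * a.
Proof.
move=> fg cvg_g.
have -> : series (poisson_iid_term lam p f) =
          fun N => c * series (poisson_iid_term lam p g) N.
  apply/funext => N; rewrite /series /= big_distrr; apply: eq_bigr => t _.
  rewrite /poisson_iid_term [RHS]mulrCA; congr (_ * _).
  by rewrite big_distrr; apply: eq_bigr => s _; rewrite fg mulrCA.
exact: cvgMl_tmp.
Qed.

Theorem mainTheorem7 (R : realType) (n m : nat) (L : 'M[R]_n)
    (D : 'I_m -> 'I_n) (w : 'I_m -> R) (alpha r : R) :
  psd L ->
  (forall k, 0 < w k) ->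
  0 < alpha ->
  1 <= r ->
  (forall i, 0 < lmarg L D w alpha i) ->
  let l := lmarg L D w alpha in
  let dt := \sum_(i < n) l i in
  let Lh := Lhat L D w in
  let st := deff (alpha *: Lh) in
  let lam := r * expR r^-1 * dt in
  series (poisson_iid_term lam (fun i => l i / dt)
    (fun t sigma =>
       expR st * \det (1%:M + alpha *: Ltilde L l r sigma)
       / (expR (t%:R / r) * \det (1%:M + alpha *: Lh)))) @ \oo -->
  expR (st + r * dt - r * expR r^-1 * dt)
    * \det (1%:M + alpha *: L) / \det (1%:M + alpha *: Lh).
Proof.
move=> _ _ _ r_ge1 l_gt0 l dt Lh st lam.
have r_neq0 : r != 0 by rewrite gt_eqF // (lt_le_trans ltr01 r_ge1).
pose c := expR st / \det (1%:M + alpha *: Lh).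
have -> : expR (st + r * dt - r * expR r^-1 * dt) * \det (1%:M + alpha *: L)
          / \det (1%:M + alpha *: Lh) =
          c * (expR (r * dt - lam) * \det (1%:M + alpha *: L)).
  by rewrite /c -addrA expRD; ring.
apply: (poisson_iid_cvgZ _ (poisson_det_Ltilde (L := L) (a := alpha) l_gt0 r_neq0)).
move=> t sigma.
by rewrite /c invfM; ring.
Qed.
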